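(* Let $H$ be a trigraph of maximum red degree at most $4$ containing a fence gadget $F$ attached to a single vertex $s$, where $s$ has red degree at most $3$, and assume $F$ satisfies the attachment rule in $H$. Then there is a partial $4$-sequence from $H$ to the trigraph $H'$ obtained from $H$ by contracting $V(F)$ into a single vertex.
   Context: A trigraph $G$ consists of a vertex set $V(G)$ and two disjoint sets of unordered pairs of distinct vertices: black edges and red edges; the red graph is formed by the red edges, and the red degree of a vertex is its degree in the red graph. Contracting two distinct vertices $u,v$ replaces them by a new vertex $w$ such that, for every other vertex $z$, $wz$ is black if $uz,vz$ are both black, a non-edge if both are non-edges, and red otherwise. A partial $d$-sequence from $G$ is a sequence of trigraphs starting at $G$, each obtained from the previous by one contraction, all of maximum red degree at most $d$. A fence gadget is a trigraph $F$ on $A\cup B$, $A=\{a_1,\dots,a_6\}$, $B=\{b_1,\dots,b_6\}$, whose black edges are those of the cycles $a_1a_2a_3a_4a_5a_6a_1$ and $b_1b_2b_3b_4b_5b_6b_1$ together with $b_1a_6$, and whose red edges are $a_ib_i$ for $i\in[6]$ and $a_ib_{i+1}$ for $i\in[5]$. Inside a trigraph $G$, $F$ is attached to a nonempty set $S\subseteq V(G)\setminus V(F)$ if every vertex of $A$ is joined by a black edge to every vertex of $S$ and no vertex of $B$ is adjacent to a vertex of $S$. $F$ satisfies the attachment rule in $G$ if $V(F)$ is the vertex set of a connected component of the red graph of $G$ and there is a set $X\subseteq V(G)\setminus(V(F)\cup S)$ such that every vertex of $A$ has exactly $X\cup S$ as its set of neighbours outside $V(F)$, every vertex of $B$ has exactly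 $X$ as its set of neighbours outside $V(F)$ (all these edges black), and every vertex of $X$ is adjacent to every vertex of $S$. *)

From mathcomp Require Import all_boot all_order.
Set Implicit Arguments. Unset Strict Implicit. Unset Printing Implicit Defensive.

(* A trigraph with vertices drawn from a finite ambient type T.
   Unordered pairs are represented as 2-element sets. *)
Record trigraph (T : finType) := Trigraph {
  tV : {set T};
  tB : {set {set T}};
  tR : {set {set T}}
}.

Section Trigraphs.
Variable T : finType.
Implicit Types (G : trigraph T) (S : {set T}) (x y z r : T).

Definition wf_trigraph G : Prop :=
  (forall e, e \in tB G :|: tR G -> e \subset tV G /\ #|e| = 2) /\
  [disjoint tB G & tR G].

Definition adj G x y : bool := ([set x; y] \in tB G) || ([set x; y] \in tR G).
Definition redrel G : rel T := fun x y => [set x; y] \in tR G.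

Definition red_deg G x : nat := #|[set z in tV G | [set x; z] \in tR G]|.

Definition max_red_le G (d : nat) : Prop :=
  forall x, x \in tV G -> red_deg G x <= d.

(* Contract the set S (nonempty, S ⊆ V) into a single new vertex, which is
   named r (r ∈ S). *)
Definition contractSet G S r : trigraph T :=
  Trigraph ((tV G :\: S) :|: [set r])
    ([set e in tB G | e \subset tV G :\: S] :|:
     [set [set r; z] | z in tV G :\: S & [forall x in S, [set x; z] \in tB G]])
    ([set e in tR G | e \subset tV G :\: S] :|:
     [set [set r; z] | z in tV G :\: S &
        ~~ [forall x in S, [set x; z] \in tB G] && [exists x in S, adj G x z]]).

Definition contract G u v : trigraph T := contractSet G [set u; v] u.

Inductive dseq (d : nat) : trigraph T -> trigraph T -> Prop :=
| dseq_nil G : max_red_le G d -> dseq d G G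
| dseq_cons G u v G' :
    max_red_le G d -> u \in tV G -> v \in tV G -> u != v ->
    dseq d (contract G u v) G' -> dseq d G G'.

(* Fence gadget, 0-based indices: a_i = a (i-1), b_i = b (i-1). *)
Definition cyc6 (i j : 'I_6) : bool := (j == (i.+1 %% 6) :> nat) || (i == (j.+1 %% 6) :> nat).

Definition fence_vertices (a b : 'I_6 -> T) : {set T} :=
  [set a i | i in 'I_6] :|: [set b i | i in 'I_6].

Definition is_fence G (a b : 'I_6 -> T) : Prop :=
  injective a /\ injective b /\ (forall i j, a i != b j) /\
  fence_vertices a b \subset tV G /\
  (forall i j, ([set a i; a j] \in tB G) = cyc6 i j) /\
  (forall i j, ([set b i; b j] \in tB G) = cyc6 i j) /\
  (forall i j, ([set a i; a j] \in tR G) = false) /\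
  (forall i j, ([set b i; b j] \in tR G) = false) /\
  (forall i j, ([set a i; b j] \in tB G) = ((j == 0 :> nat) && (i == 5 :> nat))) /\
  (forall i j, ([set a i; b j] \in tR G) =
                 ((j == i :> nat) || ((j == i.+1 :> nat) && (i < 5)))).

Definition attached G (a b : 'I_6 -> T) S : Prop :=
  S != set0 /\ S \subset tV G :\: fence_vertices a b /\
  (forall i x, x \in S -> [set a i; x] \in tB G) /\
  (forall i x, x \in S -> ~~ adj G (b i) x).

Definition attachment_rule G (a b : 'I_6 -> T) S : Prop :=
  (exists2 x, x \in fence_vertices a b &
     fence_vertices a b = [set y | connect (redrel G) x y]) /\
  exists X : {set T},
    X \subset tV G :\: (fence_vertices a b :|: S) /\
    (forall i z, z \in tV G :\: fence_vertices a b ->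
        (adj G (a i) z = (z \in X :|: S)) /\
        (z \in X :|: S -> [set a i; z] \in tB G)) /\
    (forall i z, z \in tV G :\: fence_vertices a b ->
        (adj G (b i) z = (z \in X)) /\
        (z \in X -> [set b i; z] \in tB G)) /\
    (forall x y, x \in X -> y \in S -> adj G x y).

End Trigraphs.

From mathcomp Require Import all_boot all_order.
Set Implicit Arguments. Unset Strict Implicit. Unset Printing Implicit Defensive.

(* A trigraph reached from H by contractions is the quotient of H along the map
   sending each vertex of H to the vertex it has been merged into: two classes
   are joined by a black edge iff all pairs across them are black in H, and by
   a red edge iff some pair is adjacent but not all pairs are black.  While only
   fence vertices are merged, this map is a relabelling of the twelve fence
   vertices, and the attachment rule pins down all red edges leaving the fence:
   s becomes red to exactly the classes meeting both A and B, and no other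
   outside vertex gains a red edge.  An explicit sequence of eleven contractions
   is then checked by computation to keep every class at red degree at most 4
   with at most one mixed class at a time, so that s stays at red degree at
   most 3 + 1. *)

Section Quotients.
Variable T : finType.
Implicit Types (G H : trigraph T) (p q : T -> T) (S : {set T}) (e : {set T}) (x y u w : T).

Definition blackrel G : rel T := fun x y => [set x; y] \in tB G.

Lemma blackrel_sym G : symmetric (blackrel G).
Proof. by move=> x y; rewrite /blackrel setUC. Qed.

Lemma redrel_sym G : symmetric (redrel G).
Proof. by move=> x y; rewrite /redrel setUC. Qed.

Lemma adj_sym G : symmetric (adj G).
Proof. by move=> x y; rewrite /adj setUC. Qed.

Lemma set2_injr x y y' : y != x -> [set x; y] = [set x; y'] -> y = y'.
Proof.
move=> yx E; have : y \in [set x; y'] by rewrite -E set22.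
by case/set2P=> // Eyx; rewrite Eyx eqxx in yx.
Qed.

Lemma wf_edgeP G e : wf_trigraph G -> e \in tB G :|: tR G ->
  exists x y, [/\ x != y, x \in tV G, y \in tV G & e = [set x; y]].
Proof.
move=> [wfE _] /wfE[sub c2]; have /cards2P[x [y [xy E]]] : #|e| == 2 by rewrite c2.
by exists x, y; split=> //; apply: (subsetP sub); rewrite E ?set21 ?set22.
Qed.

Lemma wf_redrel G x y : wf_trigraph G -> redrel G x y ->
  [/\ x != y, x \in tV G & y \in tV G].
Proof.
move=> [wfE _] hr; have [sub c2] : [set x; y] \subset tV G /\ #|[set x; y]| = 2.
  by apply: wfE; rewrite in_setU; apply/orP; right.
split; [|by apply: (subsetP sub); rewrite set21|by apply: (subsetP sub); rewrite set22].
by apply: contra_eqN c2 => /eqP->; rewrite setUid cards1.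
Qed.

Definition fibre_black H p x y : Prop :=
  forall u w, u \in tV H -> w \in tV H -> p u = x -> p w = y -> blackrel H u w.

Definition fibre_adj H p x y : Prop :=
  exists u w, [/\ u \in tV H, w \in tV H, p u = x, p w = y & adj H u w].

Definition fibre_red H p x y : Prop := ~ fibre_black H p x y /\ fibre_adj H p x y.

Definition is_quotient H p G : Prop :=
  [/\ wf_trigraph G, tV G = p @: tV H &
      forall x y, x \in tV G -> y \in tV G -> x != y ->
        (blackrel G x y <-> fibre_black H p x y) /\
        (redrel G x y <-> fibre_red H p x y)].

Definition same_fibre H p p' x x' : Prop :=
  forall u, u \in tV H -> (p u = x <-> p' u = x').

Lemma fibre_black_congr H p p' x y x' y' :
  same_fibre H p p' x x' -> same_fibre H p p' y y' ->
  fibre_black H p x y <-> fibre_black H p' x' y'.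
Proof.
by move=> ex ey; split=> hb u w hu hw /ex-/(_ hu) eu /ey-/(_ hw) ew; apply: hb.
Qed.

Lemma fibre_adj_congr H p p' x y x' y' :
  same_fibre H p p' x x' -> same_fibre H p p' y y' ->
  fibre_adj H p x y <-> fibre_adj H p' x' y'.
Proof.
move=> ex ey; split=> -[u [w [hu hw eu ew huw]]]; exists u, w.
  by split=> //; [apply/ex | apply/ey].
by split=> //; [apply/ex | apply/ey].
Qed.

Lemma fibre_red_congr H p p' x y x' y' :
  same_fibre H p p' x x' -> same_fibre H p p' y y' ->
  fibre_red H p x y <-> fibre_red H p' x' y'.
Proof.
move=> ex ey; have eb := fibre_black_congr ex ey; have ea := fibre_adj_congr ex ey.
by split=> -[nb ha]; split; by [move/eb | apply/ea | move/eb | apply/ea].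
Qed.

Lemma fibre_black_sym H p x y : fibre_black H p x y <-> fibre_black H p y x.
Proof. by split=> hb u w hu hw eu ew; rewrite blackrel_sym; apply: hb. Qed.

Lemma fibre_red_sym H p x y : fibre_red H p x y <-> fibre_red H p y x.
Proof.
suff sym x' y' : fibre_red H p x' y' -> fibre_red H p y' x' by split; apply: sym.
move=> [nb [u [w [hu hw eu ew huw]]]]; split; first by move/fibre_black_sym.
by exists w, u; split=> //; rewrite adj_sym.
Qed.

Lemma is_quotient_eq_in H p p' G :
  is_quotient H p G -> {in tV H, p =1 p'} -> is_quotient H p' G.
Proof.
move=> [wfG VG EG] pp'; have same z : same_fibre H p p' z z by move=> u /pp'->.
split=> //; first by rewrite VG; apply: eq_in_imset.
move=> x y hx hy xy; have [hb hr] := EG x y hx hy xy.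
split; first exact: iff_trans hb (fibre_black_congr (same x) (same y)).
exact: iff_trans hr (fibre_red_congr (same x) (same y)).
Qed.

Lemma quotient_adj H p G x y : is_quotient H p G ->
  x \in tV G -> y \in tV G -> x != y -> adj G x y <-> fibre_adj H p x y.
Proof.
move=> [_ VG EG] hx hy xy; have [[hb hb'] [hr hr']] := EG x y hx hy xy.
split=> [/orP[/hb fb | /hr[] //] | fa].
  have /imsetP[u hu xE] : x \in p @: tV H by rewrite -VG.
  have /imsetP[w hw yE] : y \in p @: tV H by rewrite -VG.
  by exists u, w; split; rewrite -?xE -?yE //; apply/orP; left; apply: fb.
case bxy: (blackrel G x y); first by apply/orP; left.
apply/orP; right; apply: hr'; split=> // /hb'; by rewrite bxy.
Qed.

Lemma is_quotient_id H : wf_trigraph H -> is_quotient H id H.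
Proof.
move=> wfH; split=> //; first by rewrite imset_id.
move=> x y hx hy xy; split.
  by split=> [hb u w _ _ /= -> -> // | hb]; apply: hb.
split=> [hr | [nb [u [w [_ _ /= -> -> /orP[hb | //]]]]]].
  split; last by exists x, y; split=> //; apply/orP; right.
  by move=> /(_ x y hx hy erefl erefl) /(disjointFr wfH.2); rewrite /= -/(redrel H x y) hr.
by exfalso; apply: nb => u' w' _ _ /= -> ->.
Qed.

Lemma notin_new_edges G S r x y (P : pred T) : r \in S ->
  x \in tV G :\: S -> y \in tV G :\: S ->
  [set x; y] \notin [set [set r; z] | z in tV G :\: S & P z].
Proof.
move=> rS hx hy; apply/imsetP=> -[z _ E].
have : r \in [set x; y] by rewrite E set21.
by case/set2P=> Er; [move: hx | move: hy]; rewrite -Er in_setD rS.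
Qed.

Lemma blackrel_contractSet_out G S r x y : r \in S ->
  x \in tV G :\: S -> y \in tV G :\: S ->
  blackrel (contractSet G S r) x y = blackrel G x y.
Proof.
move=> rS hx hy; rewrite /blackrel /= in_setU (negbTE (notin_new_edges _ rS hx hy)).
by rewrite orbF inE subUset !sub1set hx hy !andbT.
Qed.

Lemma redrel_contractSet_out G S r x y : r \in S ->
  x \in tV G :\: S -> y \in tV G :\: S ->
  redrel (contractSet G S r) x y = redrel G x y.
Proof.
move=> rS hx hy; rewrite /redrel /= in_setU (negbTE (notin_new_edges _ rS hx hy)).
by rewrite orbF inE subUset !sub1set hx hy !andbT.
Qed.

Lemma new_edge_notin_old G S r y (E : {set {set T}}) : r \in S ->
  [set r; y] \notin [set e in E | e \subset tV G :\: S].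
Proof. by move=> rS; rewrite inE subUset sub1set in_setD rS andbF. Qed.

Lemma mem_new_edges G S r y (P : pred T) : r \in S -> y \in tV G :\: S ->
  ([set r; y] \in [set [set r; z] | z in tV G :\: S & P z]) = P y.
Proof.
move=> rS hy; have yr : y != r by apply: contraTneq hy => ->; rewrite in_setD rS.
apply/imsetP/idP => [[z] | Py]; last by exists y; rewrite // inE hy.
by rewrite inE => /andP[_ Pz] /(set2_injr yr) ->.
Qed.

Lemma blackrel_contractSet_new G S r y : r \in S -> y \in tV G :\: S ->
  blackrel (contractSet G S r) r y = [forall x in S, blackrel G x y].
Proof.
by move=> rS hy; rewrite /blackrel /= in_setU (negbTE (new_edge_notin_old G y _ rS)) mem_new_edges.
Qed.

Lemma redrel_contractSet_new G S r y : r \in S -> y \in tV G :\: S ->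
  redrel (contractSet G S r) r y =
    ~~ [forall x in S, blackrel G x y] && [exists x in S, adj G x y].
Proof.
by move=> rS hy; rewrite /redrel /= in_setU (negbTE (new_edge_notin_old G y _ rS)) mem_new_edges.
Qed.

Lemma wf_contractSet G S r : wf_trigraph G -> r \in S -> wf_trigraph (contractSet G S r).
Proof.
move=> [wfE disjBR] rS.
have new_ok z : z \in tV G :\: S ->
    [set r; z] \subset tV (contractSet G S r) /\ #|[set r; z]| = 2.
  move=> hz; split; first by rewrite subUset !sub1set /= !in_setU in_set1 eqxx orbT hz.
  by rewrite cards2; case: eqP => // Erz; move: hz; rewrite -Erz in_setD rS.
have old_ok (E : {set {set T}}) e : E \subset tB G :|: tR G ->
    e \in [set e' in E | e' \subset tV G :\: S] ->
    e \subset tV (contractSet G S r) /\ #|e| = 2.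
  move=> sE; rewrite inE => /andP[eE sub]; split; first exact: subset_trans sub (subsetUl _ _).
  exact: (wfE e (subsetP sE e eE)).2.
split=> [e | ].
  rewrite /= !in_setU => /orP[]/orP[] he.
  - by apply: old_ok he; apply: subsetUl.
  - by case/imsetP: he => z; rewrite inE => /andP[hz _] ->; apply: new_ok.
  - by apply: old_ok he; apply: subsetUr.
  - by case/imsetP: he => z; rewrite inE => /andP[hz _] ->; apply: new_ok.
rewrite -setI_eq0; apply/eqP/setP=> e; rewrite !inE; apply/negbTE.
apply/negP=> /andP[/orP[/andP[eB eBS] | /imsetP[z hz ->]] /orP[/andP[eR eRS] | hR]].
- by rewrite (disjointFr disjBR eB) in eR.
- case/imsetP: hR => z _ Ee.
  by rewrite Ee subUset sub1set in_setD rS in eBS.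
- by rewrite subUset sub1set in_setD rS in eRS.
- move: hz; rewrite inE => /andP[hz allB].
  by rewrite mem_new_edges // allB in hR.
Qed.

Section ContractQuotient.
Variables (H G : trigraph T) (p q : T -> T) (S : {set T}) (r : T).
Hypotheses (quotG : is_quotient H p G) (sSG : S \subset tV G) (rS : r \in S).
Hypothesis qE : forall t, t \in tV H -> q t = if p t \in S then r else p t.

Lemma contracted_other x y : x \in S -> y \in tV G :\: S -> x \in tV G /\ x != y.
Proof.
by move=> xS /setDP[_ yS]; split; [exact: subsetP sSG x xS | apply: contraNneq yS => <-].
Qed.

Lemma same_fibre_contract x : x \notin S -> same_fibre H p q x x.
Proof.
move=> xS u hu; rewrite qE //; case: ifP => puS; split=> // Eu.
- by rewrite -Eu puS in xS.
- by rewrite -Eu rS in xS.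
Qed.

Lemma fibre_contracted u : u \in tV H -> (p u \in S <-> q u = r).
Proof. by move=> hu; rewrite qE //; case: ifP => puS; split=> // Epu; rewrite Epu rS in puS. Qed.

Lemma fibre_black_contracted y : y \in tV G :\: S ->
  [forall x in S, blackrel G x y] <-> fibre_black H q r y.
Proof.
move=> hyS; have [hy yS] := setDP hyS; have [_ _ EG] := quotG.
split=> [/forall_inP allB u w hu hw /(fibre_contracted hu) puS /(same_fibre_contract yS hw) pwy|].
  have [hx xy] := contracted_other puS hyS.
  exact: ((EG _ _ hx hy xy).1.1 (allB _ puS)).
move=> fb; apply/forall_inP=> x xS; have [hx xy] := contracted_other xS hyS.
apply/(EG _ _ hx hy xy).1.
move=> u w hu hw pux pwy; apply: fb => //.
- by apply/(fibre_contracted hu); rewrite pux.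
- exact/(same_fibre_contract yS hw).
Qed.

Lemma fibre_adj_contracted y : y \in tV G :\: S ->
  [exists x in S, adj G x y] <-> fibre_adj H q r y.
Proof.
move=> hyS; have [hy yS] := setDP hyS.
split=> [/exists_inP[x xS] | ].
  have [hx xy] := contracted_other xS hyS.
  move/(quotient_adj quotG hx hy xy) => [u [w [hu hw pux pwy huw]]]; exists u, w; split=> //.
    by apply/(fibre_contracted hu); rewrite pux.
  exact/(same_fibre_contract yS hw).
move=> [u [w [hu hw /(fibre_contracted hu) puS /(same_fibre_contract yS hw) pwy huw]]].
have [hx xy] := contracted_other puS hyS.
apply/exists_inP; exists (p u) => //.
by apply/(quotient_adj quotG hx hy xy); exists u, w.
Qed.

Local Notation C := (contractSet G S r).

Lemma contractSet_edges_new y : y \in tV G :\: S ->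
  (blackrel C r y <-> fibre_black H q r y) /\ (redrel C r y <-> fibre_red H q r y).
Proof.
move=> hy; rewrite blackrel_contractSet_new // redrel_contractSet_new //.
have [eb ea] := (fibre_black_contracted hy, fibre_adj_contracted hy).
split=> //; split=> [/andP[nb fa] | [nb fa]].
  by split; [move/eb; apply/negP | apply/ea].
by apply/andP; split; [apply/negP => /eb | apply/ea].
Qed.

Lemma contractSet_vertices : tV C = q @: tV H.
Proof.
have [_ VG _] := quotG; apply/setP=> t; rewrite /= in_setU in_set1 in_setD.
apply/idP/imsetP=> [/orP[/andP[tS] | /eqP ->] | [u hu ->]].
- rewrite VG => /imsetP[u hu tE]; exists u => //.
  by rewrite qE // -tE (negbTE tS).
- have /imsetP[u hu rE] : r \in p @: tV H by rewrite -VG (subsetP sSG).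
  by exists u => //; rewrite qE // -rE rS.
- rewrite qE //; case: ifP => puS; first by rewrite eqxx orbT.
  by rewrite puS VG imset_f.
Qed.

Lemma is_quotient_contractSet : is_quotient H q C.
Proof.
have [wfG _ EG] := quotG.
split; [exact: wf_contractSet | exact: contractSet_vertices | ].
move=> x y; rewrite /= !in_setU !in_set1 => /orP[hx | /eqP->] /orP[hy | /eqP->] xy.
- have [hxG xS] := setDP hx; have [hyG yS] := setDP hy.
  have [sx sy] := (same_fibre_contract xS, same_fibre_contract yS).
  rewrite blackrel_contractSet_out // redrel_contractSet_out //.
  have [hb hr] := EG x y hxG hyG xy.
  by split; [apply: iff_trans hb (fibre_black_congr sx sy)
            | apply: iff_trans hr (fibre_red_congr sx sy)].
- have [hb hr] := contractSet_edges_new hx.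
  rewrite blackrel_sym redrel_sym; split.
    exact: iff_trans hb (fibre_black_sym _ _ _ _).
  exact: iff_trans hr (fibre_red_sym _ _ _ _).
- exact: contractSet_edges_new.
- by rewrite eqxx in xy.
Qed.

End ContractQuotient.

Lemma quotient_edges_sub H p G1 G2 : is_quotient H p G1 -> is_quotient H p G2 ->
  {subset tB G1 <= tB G2} /\ {subset tR G1 <= tR G2}.
Proof.
move=> [wf1 V1 E1] [_ V2 E2].
split=> e he.
  have /(wf_edgeP wf1)[x [y [xy hx hy Ee]]] : e \in tB G1 :|: tR G1 by rewrite in_setU he.
  rewrite Ee in he *.
  have [hx2 hy2] : x \in tV G2 /\ y \in tV G2 by rewrite V2 -V1.
  exact: (E2 x y hx2 hy2 xy).1.2 ((E1 x y hx hy xy).1.1 he).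
have /(wf_edgeP wf1)[x [y [xy hx hy Ee]]] : e \in tB G1 :|: tR G1 by rewrite in_setU he orbT.
rewrite Ee in he *.
have [hx2 hy2] : x \in tV G2 /\ y \in tV G2 by rewrite V2 -V1.
exact: (E2 x y hx2 hy2 xy).2.2 ((E1 x y hx hy xy).2.1 he).
Qed.

Lemma is_quotient_uniq H p G1 G2 :
  is_quotient H p G1 -> is_quotient H p G2 -> G1 = G2.
Proof.
move=> q1 q2; have [[_ V1 _] [_ V2 _]] := (q1, q2).
have [sB12 sR12] := quotient_edges_sub q1 q2.
have [sB21 sR21] := quotient_edges_sub q2 q1.
case: G1 G2 q1 q2 V1 V2 sB12 sR12 sB21 sR21 => [V1 B1 R1] [V2 B2 R2] /= _ _ -> -> *.
by congr Trigraph; apply/setP=> e; apply/idP/idP; auto.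
Qed.

End Quotients.

(* [(false, i)] labels a_i and [(true, i)] labels b_i, see [fvert] below. *)
Definition label := (bool * 'I_6)%type.

Definition pattern_black (k l : label) : bool :=
  if k.1 == l.1 then cyc6 k.2 l.2
  else if k.1 then (k.2 == 0 :> nat) && (l.2 == 5 :> nat)
  else (l.2 == 0 :> nat) && (k.2 == 5 :> nat).

Definition pattern_red (k l : label) : bool :=
  if k.1 == l.1 then false
  else if k.1 then (k.2 == l.2 :> nat) || ((k.2 == l.2.+1 :> nat) && (l.2 < 5))
  else (l.2 == k.2 :> nat) || ((l.2 == k.2.+1 :> nat) && (k.2 < 5)).

(* Unlike [inord], [ord6] reduces under [vm_compute]. *)
Definition ord6 (i : nat) : 'I_6 := Ordinal (ltn_pmod i (isT : 0 < 6)).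

Lemma ord6K (i : 'I_6) : ord6 i = i.
Proof. by apply: val_inj; rewrite /= modn_small. Qed.

Definition labels : seq label :=
  [seq (false, ord6 i) | i <- iota 0 6] ++ [seq (true, ord6 i) | i <- iota 0 6].

Lemma mem_labels k : k \in labels.
Proof.
case: k => [[] i]; rewrite mem_cat -[i]ord6K; apply/orP; [right | left].
all: by apply: (map_f (fun j => (_, ord6 j))); rewrite mem_iota /=.
Qed.

Lemma card_le_count (P : pred label) : #|[set l | P l]| <= count P labels.
Proof.
rewrite -size_filter; apply: leq_trans (card_size _); apply: subset_leq_card.
by apply/subsetP=> l; rewrite inE mem_filter mem_labels andbT.
Qed.

(* Much faster than the generic [==] under [vm_compute]. *)
Definition eq_label (k l : label) : bool := eqb k.1 l.1 && eqn k.2 l.2.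

Lemma eq_labelE k l : eq_label k l = (k == l).
Proof. by rewrite /eq_label eqbE; case: k l. Qed.

Section Labellings.
Variable q : label -> label.
Implicit Types (k l : label).

Definition is_class k := has (fun k' => eq_label (q k') k) labels.

Definition class_black k l := all (fun k' => all (fun l' =>
  eq_label (q k') k && eq_label (q l') l ==> pattern_black k' l') labels) labels.

Definition class_adj k l := has (fun k' => has (fun l' =>
  [&& eq_label (q k') k, eq_label (q l') l & pattern_black k' l' || pattern_red k' l'])
  labels) labels.

Definition class_red k l := ~~ class_black k l && class_adj k l.

Definition class_mixed k :=
  has (fun k' => eq_label (q k') k && k'.1) labels &&
  has (fun k' => eq_label (q k') k && ~~ k'.1) labels.

Definition class_red_deg k :=
  count (fun l => [&& is_class l, ~~ eq_label l k & class_red k l]) labels + class_mixed k.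

Definition red_bounded :=
  all (fun k => is_class k ==> (class_red_deg k <= 4)) labels &&
  (count class_mixed labels <= 1).

End Labellings.

(* The [let] keeps the evaluation of iterated merges linear. *)
Definition merge (q : label -> label) (x y : label) : label -> label :=
  fun k => let c := q k in if eq_label c y then x else c.

Fixpoint contracts_to (q : label -> label) (st : seq (label * label)) (r : label) :=
  if st is (x, y) :: st' then
    [&& red_bounded q, is_class q x, is_class q y, ~~ eq_label x y &
        contracts_to (merge q x y) st' r]
  else red_bounded q && all (fun k => eq_label (q k) r) labels.

Definition lab_a (i : nat) : label := (false, ord6 i).
Definition lab_b (i : nat) : label := (true, ord6 i).

Definition fence_steps : seq (label * label) :=
  [:: (lab_a 0, lab_b 0); (lab_b 1, lab_b 2); (lab_a 1, lab_a 2); (lab_b 3, lab_b 1);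
      (lab_a 3, lab_a 1); (lab_b 4, lab_b 3); (lab_a 4, lab_a 0); (lab_a 5, lab_a 3);
      (lab_b 5, lab_b 4); (lab_a 4, lab_a 5); (lab_b 5, lab_a 4)].

Lemma fence_steps_contract : contracts_to id fence_steps (lab_b 5).
Proof. by vm_compute. Qed.

Section Fence.
Variables (T : finType) (H : trigraph T) (a b : 'I_6 -> T) (s : T).
Hypothesis fenceH : is_fence H a b.
Local Notation F := (fence_vertices a b).

Definition fvert (k : label) : T := if k.1 then b k.2 else a k.2.

Lemma fvert_inj : injective fvert.
Proof.
have [ia [ib [ab _]]] := fenceH.
move=> [[] i] [[] j]; rewrite /fvert /= => E.
- by rewrite (ib _ _ E).
- by move: (ab j i); rewrite E eqxx.
- by move: (ab i j); rewrite E eqxx.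
- by rewrite (ia _ _ E).
Qed.

Lemma fenceP t : reflect (exists k, fvert k = t) (t \in F).
Proof.
apply: (iffP setUP) => [[] /imsetP[i _ ->] | [[[] i] <-]].
- by exists (false, i).
- by exists (true, i).
- by right; apply: imset_f.
- by left; apply: imset_f.
Qed.

Lemma fvert_fence k : fvert k \in F.
Proof. by apply/fenceP; exists k. Qed.

Lemma fence_sub : F \subset tV H.
Proof. by case: fenceH => _ [_ [_ []]]. Qed.

Lemma fvert_tV k : fvert k \in tV H.
Proof. exact: subsetP fence_sub _ (fvert_fence k). Qed.

Lemma blackrel_fvert k l : blackrel H (fvert k) (fvert l) = pattern_black k l.
Proof.
have [_ [_ [_ [_ [hA [hB [_ [_ [hAB _]]]]]]]]] := fenceH.
case: k l => [[] i] [[] j]; rewrite /blackrel /fvert /pattern_black /= ?hA ?hB //.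
by rewrite setUC hAB.
Qed.

Lemma redrel_fvert k l : redrel H (fvert k) (fvert l) = pattern_red k l.
Proof.
have [_ [_ [_ [_ [_ [_ [hA [hB [_ hAB]]]]]]]]] := fenceH.
case: k l => [[] i] [[] j]; rewrite /redrel /fvert /pattern_red /= ?hA ?hB //.
by rewrite setUC hAB.
Qed.

Lemma adj_fvert k l : adj H (fvert k) (fvert l) = pattern_black k l || pattern_red k l.
Proof. by rewrite /adj -/(blackrel _ _ _) -/(redrel _ _ _) blackrel_fvert redrel_fvert. Qed.

Definition fence_map (q : label -> label) (t : T) : T :=
  if [pick k | fvert k == t] is Some k then fvert (q k) else t.

Lemma fence_map_fvert q k : fence_map q (fvert k) = fvert (q k).
Proof.
by rewrite /fence_map; case: pickP => [k' /eqP/fvert_inj -> | /(_ k)]; rewrite ?eqxx.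
Qed.

Lemma fence_map_out q t : t \notin F -> fence_map q t = t.
Proof. by rewrite /fence_map; case: pickP => // k /eqP <-; rewrite fvert_fence. Qed.

Lemma fence_map_id t : fence_map id t = t.
Proof.
by case: (boolP (t \in F)) => [/fenceP[k <-] | tF]; rewrite ?fence_map_fvert ?fence_map_out.
Qed.

Lemma fence_map_eq_fvert q u k :
  fence_map q u = fvert k <-> exists2 k', u = fvert k' & q k' = k.
Proof.
case: (boolP (u \in F)) => [/fenceP[k' <-] | uF].
  by rewrite fence_map_fvert; split=> [/fvert_inj <- | [k'' /fvert_inj -> ->]]; first exists k'.
by rewrite fence_map_out //; split=> [Eu | [k' Eu _]]; rewrite Eu fvert_fence in uF.
Qed.

Lemma fence_map_eq_out q u z : z \notin F -> fence_map q u = z <-> u = z.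
Proof.
move=> zF; case: (boolP (u \in F)) => [/fenceP[k' <-] | uF]; last by rewrite fence_map_out.
by rewrite fence_map_fvert; split=> E; rewrite -E fvert_fence in zF.
Qed.

Lemma fibre_black_fvert q k l :
  fibre_black H (fence_map q) (fvert k) (fvert l) <-> class_black q k l.
Proof.
split=> [fb | /allP cb u w _ _ /fence_map_eq_fvert[k' -> ek] /fence_map_eq_fvert[l' -> el]].
  apply/allP=> k' _; apply/allP=> l' _; rewrite !eq_labelE.
  apply/implyP=> /andP[/eqP ek /eqP el]; rewrite -blackrel_fvert.
  by apply: fb; rewrite ?fvert_tV ?fence_map_fvert ?ek ?el.
have /allP/(_ l' (mem_labels _)) := cb k' (mem_labels _).
by rewrite !eq_labelE ek el !eqxx blackrel_fvert.
Qed.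

Lemma fibre_adj_fvert q k l :
  fibre_adj H (fence_map q) (fvert k) (fvert l) <-> class_adj q k l.
Proof.
split=> [[u [w [_ _ /fence_map_eq_fvert[k' -> ek] /fence_map_eq_fvert[l' -> el] huw]]] | ].
  apply/hasP; exists k'; first exact: mem_labels.
  by apply/hasP; exists l'; rewrite ?mem_labels // !eq_labelE ek el !eqxx -adj_fvert.
move=> /hasP[k' _ /hasP[l' _]]; rewrite !eq_labelE => /and3P[/eqP ek /eqP el huw].
by exists (fvert k'), (fvert l'); rewrite !fence_map_fvert ek el adj_fvert !fvert_tV.
Qed.

Lemma fibre_red_fvert q k l :
  fibre_red H (fence_map q) (fvert k) (fvert l) <-> class_red q k l.
Proof.
rewrite /fibre_red /class_red; have [eb ea] := (fibre_black_fvert q k l, fibre_adj_fvert q k l).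
split=> [[nb fa] | /andP[nb fa]].
  by apply/andP; split; [apply/negP => /eb | apply/ea].
by split; [move/eb; apply/negP | apply/ea].
Qed.

Lemma fibre_black_fvert_out q k z : z \in tV H -> z \notin F ->
  fibre_black H (fence_map q) (fvert k) z <->
  forall k', q k' = k -> blackrel H (fvert k') z.
Proof.
move=> hz zF; split=> [fb k' ek | fb u w _ _ /fence_map_eq_fvert[k' -> ek]].
  by apply: fb; rewrite ?fvert_tV ?fence_map_fvert ?ek ?fence_map_out.
by move/(fence_map_eq_out _ _ zF) ->; apply: fb.
Qed.

Lemma fibre_adj_fvert_out q k z : z \in tV H -> z \notin F ->
  fibre_adj H (fence_map q) (fvert k) z <->
  exists2 k', q k' = k & adj H (fvert k') z.
Proof.
move=> hz zF; split=> [[u [w [_ _ /fence_map_eq_fvert[k' -> ek]]]] | [k' ek hadj]].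
  by move/(fence_map_eq_out _ _ zF) => -> hadj; exists k'.
by exists (fvert k'), z; rewrite fence_map_fvert fence_map_out ?ek ?fvert_tV.
Qed.

Lemma fibre_red_out q z w : z \notin F -> w \notin F ->
  fibre_red H (fence_map q) z w -> redrel H z w.
Proof.
move=> zF wF [nb [u [w' [_ _ /(fence_map_eq_out _ _ zF) -> /(fence_map_eq_out _ _ wF) ->]]]].
case/orP=> // hb; exfalso; apply: nb => u' w'' _ _.
by move=> /(fence_map_eq_out _ _ zF) -> /(fence_map_eq_out _ _ wF) ->.
Qed.

Lemma fence_map_merge q x y t :
  fence_map (merge q x y) t =
  let c := fence_map q t in if c \in [set fvert x; fvert y] then fvert x else c.
Proof.
case: (boolP (t \in F)) => [/fenceP[k <-] | tF]; last first.
  have tXY : t \notin [set fvert x; fvert y].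
    by apply: contra tF => /set2P[] ->; apply: fvert_fence.
  by rewrite /= !fence_map_out // (negbTE tXY).
rewrite /= !fence_map_fvert /merge in_set2 !(inj_eq fvert_inj) eq_labelE.
by case: (q k =P y) => [-> | _]; rewrite ?orbT //; case: (q k =P x) => [-> |].
Qed.

Hypothesis ruleH : attachment_rule H a b [set s].

(* s is black to all of A and non-adjacent to B, and every other vertex outside
   the fence is black to all of it or non-adjacent to all of it, so the only new
   red edges leaving the fence join s to classes meeting both A and B. *)
Lemma fibre_red_fvert_out q k z : z \in tV H -> z \notin F ->
  fibre_red H (fence_map q) (fvert k) z -> z = s /\ class_mixed q k.
Proof.
move=> hz zF [nb fa]; have [_ [X [_ [ruleA [ruleB _]]]]] := ruleH.
have hzF : z \in tV H :\: F by rewrite in_setD zF hz.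
have blackA i : z \in X :|: [set s] -> blackrel H (a i) z := (ruleA i z hzF).2.
case: (boolP (z \in X)) => zX.
  exfalso; apply/nb/(fibre_black_fvert_out _ _ hz zF) => -[[] i] _.
    exact: (ruleB i z hzF).2.
  by apply: blackA; rewrite in_setU zX.
have [[[] i] ek]:= (fibre_adj_fvert_out _ _ hz zF).1 fa.
  by rewrite /fvert /= (ruleB i z hzF).1 (negbTE zX).
rewrite /fvert /= (ruleA i z hzF).1 in_setU (negbTE zX) in_set1 => /eqP zs.
split=> //; apply/andP; split; last first.
  by apply/hasP; exists (false, i); rewrite ?mem_labels //= eq_labelE ek eqxx.
case: hasP => // noB; exfalso; apply/nb/(fibre_black_fvert_out _ _ hz zF) => -[[] j] ej.
  by case: noB; exists (true, j); rewrite ?mem_labels //= eq_labelE ej eqxx.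
by apply: blackA; rewrite in_setU in_set1 zs eqxx orbT.
Qed.

Hypothesis maxH : max_red_le H 4.
Hypothesis red_deg_s : red_deg H s <= 3.

Section Quotient.
Variables (q : label -> label) (G : trigraph T).
Hypotheses (quotG : is_quotient H (fence_map q) G) (boundq : red_bounded q).

Lemma class_tV k : is_class q k -> fvert k \in tV G.
Proof.
case/hasP=> k' _; rewrite eq_labelE => /eqP <-; have [_ -> _] := quotG.
by rewrite -fence_map_fvert imset_f ?fvert_tV.
Qed.

Lemma red_deg_class k : is_class q k -> red_deg G (fvert k) <= 4.
Proof.
move=> ck; have [wfG VG EG] := quotG; have [/allP boundk _] := andP boundq.
set M := if class_mixed q k then [set s] else set0.
set N := [set l | [&& is_class q l, ~~ eq_label l k & class_red q k l]].
apply: (@leq_trans #|fvert @: N :|: M|).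
  apply/subset_leq_card/subsetP=> z; rewrite inE => /andP[hz hr].
  have [kz _ _] := wf_redrel wfG hr.
  have /(EG _ _ (class_tV ck) hz kz).2 fr := hr.
  have /imsetP[w hw zE] : z \in fence_map q @: tV H by rewrite -VG.
  rewrite {}zE in kz fr *; case: (boolP (w \in F)) => [/fenceP[l Ew] | wF].
    subst w; rewrite fence_map_fvert in kz fr *; apply/setUP; left; apply: imset_f.
    rewrite inE eq_labelE; apply/and3P; split.
    - by apply/hasP; exists l; rewrite ?mem_labels ?eq_labelE.
    - by apply: contra kz => /eqP ->.
    - exact/fibre_red_fvert.
  rewrite fence_map_out // in fr *; have [-> mk] := fibre_red_fvert_out hw wF fr.
  by rewrite /M mk in_setU in_set1 eqxx orbT.
rewrite cardsU; apply: leq_trans (leq_subr _ _) _.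
apply: leq_trans (implyP (boundk k (mem_labels k)) ck); apply: leq_add.
  exact: leq_trans (leq_imset_card _ _) (card_le_count _).
by rewrite /M; case: (class_mixed q k); rewrite ?cards1 ?cards0.
Qed.

Lemma red_deg_outside x : x \in tV H -> x \notin F -> red_deg G x <= 4.
Proof.
move=> hx xF; have [wfG VG EG] := quotG; have [_ mixed1] := andP boundq.
have hxG : x \in tV G by rewrite VG -(fence_map_out q xF) imset_f.
set M := if x == s then fvert @: [set l | class_mixed q l] else set0.
apply: (@leq_trans #|[set w in tV H | redrel H x w] :|: M|).
  apply/subset_leq_card/subsetP=> z; rewrite inE => /andP[hz hr].
  have [xz _ _] := wf_redrel wfG hr.
  have /(EG _ _ hxG hz xz).2 fr := hr.
  have /imsetP[w hw zE] : z \in fence_map q @: tV H by rewrite -VG.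
  rewrite {}zE in xz fr *; case: (boolP (w \in F)) => [/fenceP[l Ew] | wF].
    subst w; rewrite fence_map_fvert in fr *; move/fibre_red_sym: fr => fr.
    have [xs mk] := fibre_red_fvert_out hx xF fr.
    by rewrite /M xs eqxx in_setU imset_f ?orbT // inE.
  rewrite fence_map_out // in fr *.
  by rewrite in_setU inE hw (fibre_red_out xF wF fr).
rewrite cardsU; apply: leq_trans (leq_subr _ _) _; rewrite /M.
case: eqP => [-> | _]; last by rewrite cards0 addn0; apply: maxH.
apply: leq_trans (leq_add red_deg_s (_ : _ <= 1)) _ => //.
exact: leq_trans (leq_imset_card _ _) (leq_trans (card_le_count _) mixed1).
Qed.

Lemma max_red_le_quotient : max_red_le G 4.
Proof.
move=> x; have [_ -> _] := quotG; case/imsetP=> t ht ->.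
case: (boolP (t \in F)) => [/fenceP[k <-] | tF]; last by rewrite fence_map_out ?red_deg_outside.
rewrite fence_map_fvert; apply: red_deg_class.
by apply/hasP; exists k; rewrite ?mem_labels ?eq_labelE.
Qed.

End Quotient.

Hypothesis wfH : wf_trigraph H.

Lemma is_quotient_fence_collapse q r : (forall k, q k = r) ->
  is_quotient H (fence_map q) (contractSet H F (fvert r)).
Proof.
move=> qr; have quotC := is_quotient_contractSet (is_quotient_id wfH) fence_sub
  (fvert_fence r) (q := fun t => if t \in F then fvert r else t) (fun t _ => erefl).
apply: is_quotient_eq_in quotC _ => t _ /=.
by case: (boolP (t \in F)) => [/fenceP[k <-] | tF]; rewrite ?fence_map_fvert ?fence_map_out ?qr.
Qed.

Lemma dseq_contracts_to st q G r : is_quotient H (fence_map q) G ->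
  contracts_to q st r -> dseq 4 G (contractSet H F (fvert r)).
Proof.
elim: st q G => [|[x y] st IH] q G quotG.
  case/andP=> boundq /allP allr.
  have qr k : q k = r by apply/eqP; rewrite -eq_labelE allr ?mem_labels.
  rewrite -(is_quotient_uniq quotG (is_quotient_fence_collapse qr)).
  exact/dseq_nil/(max_red_le_quotient quotG).
case/and5P=> boundq cx cy xy steps.
apply: (dseq_cons (max_red_le_quotient quotG boundq) (class_tV quotG cx) (class_tV quotG cy)).
  by rewrite (inj_eq fvert_inj) -eq_labelE.
have sxy : [set fvert x; fvert y] \subset tV G.
  by rewrite subUset !sub1set (class_tV quotG cx) (class_tV quotG cy).
apply: IH steps.
exact: is_quotient_contractSet quotG sxy (set21 _ _) (fun t _ => fence_map_merge q x y t).
Qed.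

End Fence.

Theorem lemma4p10 (T : finType) (H : trigraph T) (a b : 'I_6 -> T) (s : T) :
  wf_trigraph H ->
  max_red_le H 4 ->
  is_fence H a b ->
  attached H a b [set s] ->
  red_deg H s <= 3 ->
  attachment_rule H a b [set s] ->
  exists2 r, r \in fence_vertices a b &
    dseq 4 H (contractSet H (fence_vertices a b) r).
Proof.
(* The adjacencies required by [attached] already follow from the attachment rule. *)
move=> wfH maxH fenceH _ red_deg_s ruleH.
exists (fvert a b (lab_b 5)); first exact: fvert_fence.
apply: (dseq_contracts_to fenceH ruleH maxH red_deg_s wfH _ fence_steps_contract).
by apply: is_quotient_eq_in (is_quotient_id wfH) _ => t _; rewrite (fence_map_id fenceH).
Qed.
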